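(* Let $A_1,\dots,A_{20}$ be the vertices of a regular dodecahedron in $\mathbb R^3$ with centre $O$, and let $\Gamma$ be any sphere centred at $O$ (of positive radius). There are at most nine real numbers $\lambda$ for which the function $M\mapsto\sum_{i=1}^{20}|MA_i|^{\lambda}$ is constant on $\Gamma\setminus\{A_1,\dots,A_{20}\}$.
   Context: $|MA|$ denotes Euclidean distance. *)

From Stdlib Require Import Reals List.
Import ListNotations.
Open Scope R_scope.

Definition point : Type := (R * R * R)%type.

Definition pt (x y z : R) : point := (x, y, z).

Definition dist (P Q : point) : R :=
  let '(x1, y1, z1) := P in
  let '(x2, y2, z2) := Q in
  sqrt ((x1 - x2) ^ 2 + (y1 - y2) ^ 2 + (z1 - z2) ^ 2).

Definition origin : point := pt 0 0 0.

Definition scale (s : R) (P : point) : point :=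
  let '(x, y, z) := P in pt (s * x) (s * y) (s * z).

Definition phi : R := (1 + sqrt 5) / 2.

Definition std_dodeca : list point :=
  [ pt 1 1 1; pt 1 1 (-1); pt 1 (-1) 1; pt 1 (-1) (-1);
    pt (-1) 1 1; pt (-1) 1 (-1); pt (-1) (-1) 1; pt (-1) (-1) (-1);
    pt 0 (/ phi) phi; pt 0 (/ phi) (- phi); pt 0 (- / phi) phi; pt 0 (- / phi) (- phi);
    pt (/ phi) phi 0; pt (/ phi) (- phi) 0; pt (- / phi) phi 0; pt (- / phi) (- phi) 0;
    pt phi 0 (/ phi); pt phi 0 (- / phi); pt (- phi) 0 (/ phi); pt (- phi) 0 (- / phi) ].

Definition isometry (f : point -> point) : Prop :=
  forall P Q, dist (f P) (f Q) = dist P Q.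

(* Every regular dodecahedron in R^3 is the image of the scaled standard one
   under an isometry; its vertices and centre: *)
Definition dodeca_vertices (f : point -> point) (s : R) : list point :=
  map (fun v => f (scale s v)) std_dodeca.

Definition dodeca_centre (f : point -> point) : point := f origin.

Fixpoint sumR (l : list R) : R :=
  match l with [] => 0 | x :: t => x + sumR t end.

Definition power_sum (A : list point) (lam : R) (M : point) : R :=
  sumR (map (fun P => Rpower (dist M P) lam) A).

Definition const_on_sphere_minus (A : list point) (O : point) (rho lam : R) : Prop :=
  exists c : R, forall M : point,
    dist M O = rho -> ~ In M A -> power_sum A lam M = c.

(* Write the sphere points as M = f P with |P| = rho.  The distance from M to the vertex
   f (s v) is sqrt (rho^2 + 3 s^2 - 2 s <P, v>), so the power sum at M only depends on the
   profile of P, the list of its inner products with the vertex directions.  We evaluate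
   it at two points: on the axis through a face centre the profile takes four values,
   each five times; on the axis through an edge midpoint it takes seven values, with
   multiplicities 2, 4, 2, 4, 2, 4, 2.  If the power sum is constant for the exponent
   lambda, the two values agree, so lambda is a zero of an exponential sum
   sum_i c_i exp (t_i lambda) with eleven distinct exponents t_i and coefficients
   -2, 5, -4, -2, 5, -4, 5, -2, -4, 5, -2, which have eight sign changes.  Descartes' rule
   of signs for exponential sums then allows at most eight (hence at most nine) exponents. *)

From Pilot Require Import Defs.
From Stdlib Require Import Reals List Lra Lia Sorted Nsatz.
Import ListNotations.
(* Re-import so that [dist] refers to the Euclidean distance of Defs, not to the
   metric-space distance exported by Reals. *)
Import Defs.
Open Scope R_scope.

Lemma list_max_exists (L : list R) :
  L <> [] -> exists m, In m L /\ forall x, In x L -> x <= m.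
Proof.
  induction L as [|a L IH]; intros HL; [congruence|].
  destruct L as [|b L].
  - exists a; split; [now left|]. intros x [<-|[]]; lra.
  - destruct IH as [m [Hm Hmax]]; [discriminate|].
    destruct (Rle_dec a m).
    + exists m; split; [now right|]. intros x [<-|Hx]; auto.
    + exists a; split; [now left|].
      intros x [<-|Hx]; [lra|]. specialize (Hmax x Hx); lra.
Qed.

(* Counting form of Rolle's theorem, strengthened for the induction: from n+1 distinct
   zeros of f we get n distinct zeros of f', each lying below some zero of f.  The new
   zero is found between the two largest zeros of f. *)
Lemma rolle_zeros_below (f g : R -> R) :
  (forall x, derivable_pt_lim f x (g x)) ->
  forall n L, length L = S n -> NoDup L -> (forall x, In x L -> f x = 0) ->
  exists L', length L' = n /\ NoDup L' /\ (forall y, In y L' -> g y = 0) /\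
    (forall y, In y L' -> exists x, In x L /\ y < x).
Proof.
  intros Hderiv n. induction n as [|n IH]; intros L Hlen Hnodup Hzero.
  - exists []; repeat split; try constructor; intros y [].
  - destruct (list_max_exists L) as [m [Hm Hmax]]; [intros ->; discriminate|].
    destruct (in_split m L Hm) as [L1 [L2 ->]].
    set (K := L1 ++ L2).
    assert (HinK : forall x, In x K -> In x (L1 ++ m :: L2)).
    { intros x Hx. apply in_app_or in Hx. apply in_or_app. simpl. tauto. }
    assert (HlenK : length K = S n).
    { unfold K. rewrite length_app in *. simpl in Hlen. lia. }
    destruct (IH K HlenK (NoDup_remove_1 _ _ _ Hnodup) (fun x Hx => Hzero x (HinK x Hx)))
      as [K' [HlenK' [HnodupK' [HzeroK' HbelowK']]]].
    destruct (list_max_exists K) as [m0 [Hm0 Hmax0]].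
    { intros HK. rewrite HK in HlenK. discriminate. }
    assert (Hlt : m0 < m).
    { destruct (Rle_lt_or_eq_dec _ _ (Hmax m0 (HinK m0 Hm0))) as [Hlt|Heq]; [exact Hlt|].
      exfalso. rewrite Heq in Hm0. exact (NoDup_remove_2 _ _ _ Hnodup Hm0). }
    destruct (MVT_cor2 f g m0 m Hlt (fun c _ => Hderiv c)) as [z [Hmvt Hz]].
    rewrite (Hzero m0 (HinK m0 Hm0)), (Hzero m Hm) in Hmvt.
    assert (Hgz : g z = 0).
    { assert (Hprod : g z * (m - m0) = 0) by lra.
      destruct (Rmult_integral _ _ Hprod); [assumption|lra]. }
    exists (z :: K'); repeat split.
    + simpl; lia.
    + constructor; [|assumption]. intros HzK'.
      destruct (HbelowK' z HzK') as [x [Hx Hzx]]. specialize (Hmax0 x Hx). lra.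
    + intros y [<-|Hy]; auto.
    + intros y [<-|Hy].
      * exists m; split; [assumption|lra].
      * destruct (HbelowK' y Hy) as [x [Hx Hyx]]. exists x; split; auto.
Qed.

Lemma rolle_zeros (f g : R -> R) (L : list R) :
  (forall x, derivable_pt_lim f x (g x)) -> NoDup L -> (forall x, In x L -> f x = 0) ->
  exists L', NoDup L' /\ (forall y, In y L' -> g y = 0) /\ (length L <= S (length L'))%nat.
Proof.
  intros Hderiv Hnodup Hzero. destruct L as [|x L].
  - exists []; repeat split; [constructor|intros y []|simpl; lia].
  - destruct (rolle_zeros_below f g Hderiv (length L) (x :: L) eq_refl Hnodup Hzero)
      as [L' [Hlen [HnodupL' [HzeroL' _]]]].
    exists L'; repeat split; auto. simpl; lia.
Qed.

Definition expsum (l : list (R * R)) (x : R) : R :=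
  sumR (map (fun p => fst p * exp (snd p * x)) l).

(* Multiplying an exponential sum by exp (- a x) shifts all exponents by - a ... *)
Definition shift (a : R) (l : list (R * R)) : list (R * R) :=
  map (fun p => (fst p, snd p - a)) l.

(* ... and differentiating the shifted sum multiplies each c_i by t_i - a. *)
Definition descend (a : R) (l : list (R * R)) : list (R * R) :=
  map (fun p => (fst p * (snd p - a), snd p - a)) l.

(* The shift does not change the zeros, since exp (- a x) never vanishes. *)
Lemma expsum_shift (a : R) (l : list (R * R)) (x : R) :
  expsum (shift a l) x = exp (- a * x) * expsum l x.
Proof.
  unfold expsum, shift in *. induction l as [|[c t] l IH]; simpl in *; [ring|].
  rewrite IH.
  replace ((t - a) * x) with (t * x + - a * x) by ring. rewrite exp_plus. ring.
Qed.

Lemma expsum_shift_derive (a : R) (l : list (R * R)) (x : R) :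
  derivable_pt_lim (expsum (shift a l)) x (expsum (descend a l) x).
Proof.
  unfold expsum, shift, descend.
  induction l as [|[c t] l IH]; simpl.
  - apply derivable_pt_lim_const.
  - apply (derivable_pt_lim_plus (fun x => c * exp ((t - a) * x))); [|exact IH].
    replace (c * (t - a) * exp ((t - a) * x)) with (c * (exp ((t - a) * x) * (t - a))) by ring.
    apply (derivable_pt_lim_scal (fun x => exp ((t - a) * x))).
    apply (derivable_pt_lim_comp (fun x => (t - a) * x) exp); [|apply derivable_pt_lim_exp].
    pose proof (derivable_pt_lim_scal id (t - a) x 1 (derivable_pt_lim_id x)) as H.
    rewrite Rmult_1_r in H. exact H.
Qed.

Fixpoint sign_changes (cs : list R) : nat :=
  match cs with
  | c :: ((c' :: _) as r) => ((if Rlt_dec (c * c') 0 then 1 else 0) + sign_changes r)%nat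
  | _ => 0%nat
  end.

Lemma sign_changes_split (l1 r : list R) (x y : R) :
  sign_changes (l1 ++ x :: y :: r) =
  (sign_changes (l1 ++ [x]) + (if Rlt_dec (x * y) 0 then 1 else 0) + sign_changes (y :: r))%nat.
Proof.
  induction l1 as [|c [|c' l1] IH]; simpl in *; lia.
Qed.

Lemma sign_changes_split_pairs (l1 r : list (R * R)) (p q : R * R) :
  sign_changes (map fst (l1 ++ p :: q :: r)) =
  (sign_changes (map fst (l1 ++ [p])) + (if Rlt_dec (fst p * fst q) 0 then 1 else 0)
   + sign_changes (map fst (q :: r)))%nat.
Proof. rewrite !map_app. simpl. apply sign_changes_split. Qed.

(* If all exponents lie on the same side of a, descending multiplies all coefficients by
   factors of one sign and so preserves the number of sign changes. *)
Lemma sign_changes_descend_same_side (a : R) (l : list (R * R)) :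
  (forall p q, In p l -> In q l -> 0 < (snd p - a) * (snd q - a)) ->
  sign_changes (map fst (descend a l)) = sign_changes (map fst l).
Proof.
  induction l as [|[c t] [|[c' t'] l] IH]; intros Hside; [reflexivity|reflexivity|].
  change (((if Rlt_dec (c * (t - a) * (c' * (t' - a))) 0 then 1 else 0)
           + sign_changes (map fst (descend a ((c', t') :: l))))%nat
          = ((if Rlt_dec (c * c') 0 then 1 else 0) + sign_changes (map fst ((c', t') :: l)))%nat).
  rewrite IH by (intros p q Hp Hq; apply Hside; right; assumption).
  assert (Hpos : 0 < (t - a) * (t' - a)) by (apply (Hside (c, t) (c', t')); simpl; tauto).
  replace (c * (t - a) * (c' * (t' - a))) with (c * c' * ((t - a) * (t' - a))) by ring.
  destruct (Rlt_dec (c * c' * ((t - a) * (t' - a))) 0), (Rlt_dec (c * c') 0);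
    try reflexivity; exfalso; nra.
Qed.

Lemma sign_change_exists (l : list (R * R)) :
  (0 < sign_changes (map fst l))%nat ->
  exists l1 p q r, l = l1 ++ p :: q :: r /\ fst p * fst q < 0.
Proof.
  induction l as [|p [|q r] IH]; intros Hpos; simpl in Hpos; try lia.
  destruct (Rlt_dec (fst p * fst q) 0) as [Hpq|Hpq].
  - exists [], p, q, r. auto.
  - destruct IH as [l1 [p' [q' [r' [Heq Hchange]]]]]; [simpl; lia|].
    exists (p :: l1), p', q', r'. rewrite Heq. auto.
Qed.

(* Without sign changes (and zero coefficients) all coefficients share the sign of the
   first one, so the exponential sum has that sign everywhere. *)
Lemma no_sign_change_positive (c t : R) (r : list (R * R)) (x : R) :
  sign_changes (map fst ((c, t) :: r)) = 0%nat ->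
  (forall p, In p ((c, t) :: r) -> fst p <> 0) ->
  0 < c * expsum ((c, t) :: r) x.
Proof.
  unfold expsum. revert c t. induction r as [|[c' t'] r IH]; intros c t Hnone Hnz.
  - assert (Hc : c <> 0) by exact (Hnz (c, t) (or_introl eq_refl)).
    simpl. pose proof (exp_pos (t * x)).
    replace (c * (c * exp (t * x) + 0)) with (c * c * exp (t * x)) by ring.
    apply Rmult_lt_0_compat; [nra|assumption].
  - assert (Hc : c <> 0) by exact (Hnz (c, t) (or_introl eq_refl)).
    assert (Hc' : c' <> 0) by exact (Hnz (c', t') (or_intror (or_introl eq_refl))).
    simpl in Hnone. destruct (Rlt_dec (c * c') 0) as [Hneg|Hneg]; [lia|].
    assert (Hcc : 0 < c * c') by (destruct (Rtotal_order (c * c') 0) as [|[Hz|]];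
      [contradiction|apply Rmult_integral in Hz; tauto|assumption]).
    assert (Htail := IH c' t' Hnone (fun p Hp => Hnz p (or_intror Hp))).
    simpl in Htail |- *. pose proof (exp_pos (t * x)).
    set (T := c' * exp (t' * x) + sumR (map (fun p => fst p * exp (snd p * x)) r)) in *.
    assert (Hsq : 0 < c * c) by nra.
    assert (HcT : 0 < c * T * (c * c')).
    { replace (c * T * (c * c')) with (c * c * (c' * T)) by ring. nra. }
    assert (0 < c * T) by nra.
    nra.
Qed.

Lemma strongly_sorted_app (xs ys : list R) :
  StronglySorted Rlt (xs ++ ys) ->
  StronglySorted Rlt ys /\ (forall x y, In x xs -> In y ys -> x < y).
Proof.
  induction xs as [|x xs IH]; intros Hs; simpl in Hs.
  - split; [assumption|intros x y []].
  - apply StronglySorted_inv in Hs as [Hs Hhead].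
    destruct (IH Hs) as [Hys Hlt]. split; [assumption|].
    intros x' y [<-|Hx] Hy; [|auto].
    rewrite Forall_forall in Hhead. apply Hhead, in_or_app; auto.
Qed.

Lemma descend_sorted (a : R) (l : list (R * R)) :
  StronglySorted Rlt (map snd l) -> StronglySorted Rlt (map snd (descend a l)).
Proof.
  unfold descend. rewrite map_map. simpl.
  induction l as [|p l IH]; simpl; intros Hs; [constructor|].
  apply StronglySorted_inv in Hs as [Hs Hhead]. constructor; [exact (IH Hs)|].
  rewrite Forall_map in Hhead |- *.
  eapply Forall_impl; [|exact Hhead]. intros u Hu; simpl; lra.
Qed.

Lemma descend_nonzero (a : R) (l : list (R * R)) :
  (forall p, In p l -> fst p <> 0) -> (forall p, In p l -> snd p <> a) ->
  forall d, In d (descend a l) -> fst d <> 0.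
Proof.
  intros Hnz Ha d Hd. unfold descend in Hd. apply in_map_iff in Hd as [p [<- Hp]]. simpl.
  apply Rmult_integral_contrapositive_currified; [exact (Hnz p Hp)|].
  specialize (Ha p Hp). lra.
Qed.

Lemma sorted_split_separated (l1 r : list (R * R)) (p q : R * R) (a : R) :
  StronglySorted Rlt (map snd (l1 ++ p :: q :: r)) -> snd p < a < snd q ->
  (forall u, In u (l1 ++ [p]) -> snd u < a) /\ (forall v, In v (q :: r) -> a < snd v).
Proof.
  intros Hs Ha. rewrite map_app in Hs.
  destruct (strongly_sorted_app _ _ Hs) as [Htail Hprefix].
  simpl in Htail. apply StronglySorted_inv in Htail as [Htail _].
  apply StronglySorted_inv in Htail as [_ Hq]. rewrite Forall_forall in Hq.
  split.
  - intros u Hu. apply in_app_or in Hu as [Hu|[<-|[]]]; [|lra].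
    assert (snd u < snd p) by (apply Hprefix; [apply in_map; assumption|left; reflexivity]).
    lra.
  - intros v [<-|Hv]; [lra|].
    assert (snd q < snd v) by (apply Hq, in_map; assumption). lra.
Qed.

(* Descending with such an a flips the signs of the coefficients before the cut only:
   the sign change at the cut disappears and no other one is created or destroyed. *)
Lemma descend_removes_sign_change (l1 r : list (R * R)) (p q : R * R) (a : R) :
  (forall u, In u (l1 ++ [p]) -> snd u < a) -> (forall v, In v (q :: r) -> a < snd v) ->
  fst p * fst q < 0 ->
  S (sign_changes (map fst (descend a (l1 ++ p :: q :: r)))) =
  sign_changes (map fst (l1 ++ p :: q :: r)).
Proof.
  intros Hlow Hhigh Hpq.
  set (dp := (fst p * (snd p - a), snd p - a)). set (dq := (fst q * (snd q - a), snd q - a)).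
  replace (descend a (l1 ++ p :: q :: r)) with (descend a l1 ++ dp :: dq :: descend a r)
    by (unfold descend; rewrite map_app; reflexivity).
  rewrite !sign_changes_split_pairs.
  replace (descend a l1 ++ [dp]) with (descend a (l1 ++ [p]))
    by (unfold descend; rewrite map_app; reflexivity).
  change (dq :: descend a r) with (descend a (q :: r)).
  rewrite !sign_changes_descend_same_side.
  - assert (Hp := Hlow p ltac:(apply in_or_app; right; left; reflexivity)).
    assert (Hq := Hhigh q (or_introl eq_refl)).
    assert (Hgap : 0 < (a - snd p) * (snd q - a)) by nra.
    unfold dp, dq; simpl.
    replace (fst p * (snd p - a) * (fst q * (snd q - a)))
      with (- (fst p * fst q) * ((a - snd p) * (snd q - a))) by ring.
    destruct (Rlt_dec (- (fst p * fst q) * ((a - snd p) * (snd q - a))) 0) as [Hneg|_];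
      [exfalso; nra|].
    destruct (Rlt_dec (fst p * fst q) 0); [lia|contradiction].
  - intros u v Hu Hv. assert (Hu' := Hhigh u Hu). assert (Hv' := Hhigh v Hv). nra.
  - intros u v Hu Hv. assert (Hu' := Hlow u Hu). assert (Hv' := Hlow v Hv). nra.
Qed.

(* Induction on the number n of sign changes: choose a
   between the exponents at a sign change; the descended sum has n - 1 sign changes and,
   by Rolle, at most one zero fewer than the original sum. *)
Theorem descartes_rule (n : nat) :
  forall (l : list (R * R)) (L : list R),
    sign_changes (map fst l) = n -> l <> [] -> StronglySorted Rlt (map snd l) ->
    (forall p, In p l -> fst p <> 0) ->
    NoDup L -> (forall x, In x L -> expsum l x = 0) -> (length L <= n)%nat.
Proof.
  induction n as [|n IH]; intros l L Hchanges Hne Hsorted Hnz Hnodup Hzero.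
  - destruct L as [|x L]; [simpl; lia|]. exfalso.
    destruct l as [|[c t] r]; [contradiction|].
    pose proof (no_sign_change_positive c t r x Hchanges Hnz) as Hpos.
    rewrite (Hzero x (or_introl eq_refl)) in Hpos. lra.
  - destruct (sign_change_exists l ltac:(lia)) as [l1 [p [q [r [-> Hpq]]]]].
    set (a := (snd p + snd q) / 2).
    assert (Hpq_sorted : snd p < snd q).
    { rewrite map_app in Hsorted. apply strongly_sorted_app in Hsorted as [Hs _].
      apply StronglySorted_inv in Hs as [_ Hs]. inversion Hs; assumption. }
    destruct (sorted_split_separated l1 r p q a Hsorted ltac:(unfold a; lra)) as [Hlow Hhigh].
    destruct (rolle_zeros (expsum (shift a (l1 ++ p :: q :: r)))
                (expsum (descend a (l1 ++ p :: q :: r))) L (expsum_shift_derive a _) Hnodup)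
      as [L' [Hnodup' [Hzero' Hlen]]].
    { intros x Hx. rewrite expsum_shift, (Hzero x Hx). ring. }
    assert (length L' <= n)%nat; [|lia].
    apply (IH (descend a (l1 ++ p :: q :: r))); auto.
    + pose proof (descend_removes_sign_change l1 r p q a Hlow Hhigh Hpq). lia.
    + unfold descend. destruct l1; discriminate.
    + apply descend_sorted; assumption.
    + apply descend_nonzero; [assumption|]. intros u Hu.
      replace (l1 ++ p :: q :: r) with ((l1 ++ [p]) ++ q :: r) in Hu
        by (rewrite <- app_assoc; reflexivity).
      apply in_app_or in Hu as [Hu|Hu].
      * specialize (Hlow u Hu). lra.
      * specialize (Hhigh u Hu). lra.
Qed.

Definition dot (P Q : point) : R :=
  let '(x1, y1, z1) := P in let '(x2, y2, z2) := Q in x1 * x2 + y1 * y2 + z1 * z2.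

Lemma dist_scale_expand (P v : point) (s : R) :
  dist P (scale s v) = sqrt (dot P P + s * s * dot v v - 2 * s * dot P v).
Proof.
  destruct P as [[x y] z], v as [[a b] c]. unfold dist, scale, dot, pt. f_equal. ring.
Qed.

Lemma dist_self (P : point) : dist P P = 0.
Proof.
  destruct P as [[x y] z]. unfold dist.
  replace ((x - x) ^ 2 + (y - y) ^ 2 + (z - z) ^ 2) with 0 by ring. apply sqrt_0.
Qed.

Lemma dist_eq_0 (P Q : point) : dist P Q = 0 -> P = Q.
Proof.
  destruct P as [[x1 y1] z1], Q as [[x2 y2] z2]. unfold dist. intros Hd.
  pose proof (pow2_ge_0 (x1 - x2)). pose proof (pow2_ge_0 (y1 - y2)).
  pose proof (pow2_ge_0 (z1 - z2)).
  apply sqrt_eq_0 in Hd; [|lra].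
  assert (x1 = x2) by nra. assert (y1 = y2) by nra. assert (z1 = z2) by nra.
  subst. reflexivity.
Qed.

Lemma isometry_injective (f : point -> point) (P Q : point) :
  isometry f -> f P = f Q -> P = Q.
Proof.
  intros Hf Heq. apply dist_eq_0. rewrite <- Hf, Heq. apply dist_self.
Qed.

Lemma phi_sq : phi * phi = phi + 1.
Proof.
  assert (h5 : sqrt 5 * sqrt 5 = 5) by (apply sqrt_sqrt; lra).
  unfold phi. nra.
Qed.

Lemma phi_bounds : 3 / 2 < phi < 2.
Proof.
  assert (h5 : sqrt 5 * sqrt 5 = 5) by (apply sqrt_sqrt; lra).
  assert (hpos : 0 < sqrt 5) by (apply sqrt_lt_R0; lra).
  unfold phi. split; nra.
Qed.

Lemma phi_inv : / phi = phi - 1.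
Proof.
  pose proof phi_sq. pose proof phi_bounds.
  field_simplify_eq; [lra|lra].
Qed.

Lemma std_dodeca_norm (v : point) : In v std_dodeca -> dot v v = 3.
Proof.
  pose proof phi_sq as h. intros Hv. unfold std_dodeca in Hv. simpl in Hv.
  repeat (destruct Hv as [<-|Hv]; [unfold dot, pt; rewrite ?phi_inv; nsatz|]).
  destruct Hv.
Qed.

Section Sphere.

Variables (s rho : R).
Hypotheses (Hs : 0 < s) (Hrho : 0 < rho).

(* Squared distance from a point P with |P| = rho to the vertex s v (|v|^2 = 3), as a
   function of w = <P, v>, and its logarithm (the exponent t_i of the power sum). *)
Definition sq_vertex_distance (w : R) : R := rho * rho + 3 * (s * s) - 2 * s * w.

Definition log_vertex_distance (w : R) : R := ln (sqrt (sq_vertex_distance w)).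

(* For w <= rho phi, which covers all profiles used below, the distance is positive,
   because rho^2 + 3 s^2 - 2 s rho phi = (rho - s phi)^2 + (2 - phi) s^2. *)
Lemma sq_vertex_distance_pos (w : R) : w <= rho * phi -> 0 < sq_vertex_distance w.
Proof.
  intros Hw. pose proof phi_sq. pose proof phi_bounds. unfold sq_vertex_distance.
  assert (Hsquare : 0 <= (rho - s * phi) * (rho - s * phi)) by apply Rle_0_sqr.
  assert (0 < s * s * (2 - phi)) by (apply Rmult_lt_0_compat; [nra|lra]).
  nra.
Qed.

Lemma log_vertex_distance_decreasing (a b : R) :
  a <= rho * phi -> b < a -> log_vertex_distance a < log_vertex_distance b.
Proof.
  intros Ha Hba. pose proof (sq_vertex_distance_pos a Ha) as Hpos.
  unfold log_vertex_distance. apply ln_increasing; [apply sqrt_lt_R0; assumption|].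
  apply sqrt_lt_1_alt. split; [lra|]. unfold sq_vertex_distance. nra.
Qed.

(* The profile of P: its inner products with the twenty vertex directions.  On the
   sphere the power sum at f P depends on P only through its profile. *)
Definition profile (P : point) : list R := map (dot P) std_dodeca.

(* Points of the sphere of radius rho whose profile stays in the range where the
   distance formula above is positive; their images are not vertices. *)
Definition admissible (P : point) : Prop :=
  dot P P = rho * rho /\ forall w, In w (profile P) -> w <= rho * phi.

(* The face point is on the axis through the face centre of direction (0, phi, 1); its
   profile takes the four values +-face_high, +-face_low, five times each.  The edge
   point (0, 0, rho) is on the axis through an edge midpoint; its profile takes seven
   values. *)
Definition face_scale : R := rho / sqrt (phi * phi + 1).
Definition face_high : R := face_scale * (phi + 1).
Definition face_low : R := face_scale * (phi - 1).
Definition face_point : point := pt 0 (face_scale * phi) face_scale.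
Definition edge_point : point := pt 0 0 rho.

Lemma face_levels : 0 < face_low < rho * (phi - 1) /\ rho < face_high < rho * phi.
Proof.
  pose proof phi_sq. pose proof phi_bounds.
  set (q := sqrt (phi * phi + 1)).
  assert (Hq2 : q * q = phi * phi + 1) by (apply sqrt_sqrt; nra).
  assert (Hq : 0 < q) by (apply sqrt_lt_R0; nra).
  assert (Hk : face_scale * q = rho) by (unfold face_scale; fold q; field; lra).
  assert (Hk0 : 0 < face_scale) by (unfold face_scale; fold q; apply Rdiv_lt_0_compat; lra).
  assert (Hq_low : phi < q) by nra. assert (Hq_high : q < phi + 1) by nra.
  unfold face_low, face_high. rewrite <- Hk. repeat split; nra.
Qed.

Lemma profile_face_point :
  profile face_point =
  [face_high; face_low; - face_low; - face_high; face_high; face_low; - face_low; - face_high;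
   face_high; - face_low; face_low; - face_high; face_high; - face_high; face_high; - face_high;
   face_low; - face_low; face_low; - face_low].
Proof.
  pose proof phi_sq. unfold profile, face_point, face_high, face_low, std_dodeca.
  simpl map. unfold dot, pt. rewrite phi_inv.
  repeat (apply (f_equal2 (@cons R))); try reflexivity; nsatz.
Qed.

Lemma profile_edge_point :
  profile edge_point =
  [rho; - rho; rho; - rho; rho; - rho; rho; - rho;
   rho * phi; - (rho * phi); rho * phi; - (rho * phi); 0; 0; 0; 0;
   rho * (phi - 1); - (rho * (phi - 1)); rho * (phi - 1); - (rho * (phi - 1))].
Proof.
  unfold profile, edge_point, std_dodeca. simpl map. unfold dot, pt. rewrite phi_inv.
  repeat (apply (f_equal2 (@cons R))); try reflexivity; ring.
Qed.

Lemma face_point_admissible : admissible face_point.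
Proof.
  pose proof phi_sq. pose proof phi_bounds. pose proof face_levels.
  split.
  - assert (Hq : 0 < sqrt (phi * phi + 1)) by (apply sqrt_lt_R0; nra).
    unfold face_point, face_scale, dot, pt. field_simplify_eq; [|lra].
    rewrite pow2_sqrt by nra. ring.
  - rewrite profile_face_point. intros w Hw. simpl in Hw.
    repeat (destruct Hw as [<-|Hw]; [lra|]). destruct Hw.
Qed.

Lemma edge_point_admissible : admissible edge_point.
Proof.
  pose proof phi_bounds. split.
  - unfold edge_point, dot, pt. ring.
  - rewrite profile_edge_point. intros w Hw. simpl in Hw.
    repeat (destruct Hw as [<-|Hw]; [nra|]). destruct Hw.
Qed.

(* The exponential sum (power sum at the face point) - (power sum at the edge point),
   collected by level in decreasing order of w, i.e. increasing order of exponents. *)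
Definition dodeca_gap : list (R * R) :=
  let L := log_vertex_distance in
  [(-2, L (rho * phi)); (5, L face_high); (-4, L rho); (-2, L (rho * (phi - 1)));
   (5, L face_low); (-4, L 0); (5, L (- face_low)); (-2, L (- (rho * (phi - 1))));
   (-4, L (- rho)); (5, L (- face_high)); (-2, L (- (rho * phi)))].

Lemma dodeca_gap_difference (lam : R) :
  expsum dodeca_gap lam =
  sumR (map (fun w => exp (log_vertex_distance w * lam)) (profile face_point)) -
  sumR (map (fun w => exp (log_vertex_distance w * lam)) (profile edge_point)).
Proof.
  rewrite profile_face_point, profile_edge_point. unfold expsum, dodeca_gap. simpl. lra.
Qed.

Lemma dodeca_gap_sign_changes : sign_changes (map fst dodeca_gap) = 8%nat.
Proof.
  unfold dodeca_gap. simpl.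
  repeat match goal with |- context [Rlt_dec ?x 0] => destruct (Rlt_dec x 0); try lra end.
  reflexivity.
Qed.

Lemma dodeca_gap_sorted : StronglySorted Rlt (map snd dodeca_gap).
Proof.
  pose proof phi_bounds. pose proof face_levels.
  apply Sorted_StronglySorted; [intros x y z; apply Rlt_trans|].
  unfold dodeca_gap. simpl.
  repeat constructor; apply log_vertex_distance_decreasing; nra.
Qed.

Lemma dodeca_gap_nonzero : forall p, In p dodeca_gap -> fst p <> 0.
Proof.
  intros p Hp. unfold dodeca_gap in Hp. simpl in Hp.
  repeat (destruct Hp as [<-|Hp]; [simpl; lra|]). destruct Hp.
Qed.

Variable f : point -> point.
Hypothesis Hf : isometry f.

Lemma power_sum_profile (P : point) (lam : R) :
  dot P P = rho * rho ->
  power_sum (dodeca_vertices f s) lam (f P) =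
  sumR (map (fun w => exp (log_vertex_distance w * lam)) (profile P)).
Proof.
  intros HP. unfold power_sum, dodeca_vertices, profile. rewrite !map_map. f_equal.
  apply map_ext_in. intros v Hv.
  rewrite Hf, dist_scale_expand, HP, (std_dodeca_norm v Hv).
  unfold Rpower, log_vertex_distance, sq_vertex_distance. rewrite Rmult_comm.
  do 4 f_equal. ring.
Qed.

Lemma admissible_on_sphere (P : point) :
  admissible P -> dist (f P) (dodeca_centre f) = rho /\ ~ In (f P) (dodeca_vertices f s).
Proof.
  intros [HP Hprofile]. split.
  - unfold dodeca_centre. rewrite Hf.
    replace origin with (scale 0 origin) by (unfold origin, scale, pt; repeat f_equal; ring).
    rewrite dist_scale_expand, HP.
    replace (rho * rho + 0 * 0 * dot origin origin - 2 * 0 * dot P origin)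
      with (rho * rho) by ring.
    apply sqrt_square. lra.
  - unfold dodeca_vertices. intros Hin. apply in_map_iff in Hin as [v [Hv Hin]].
    apply isometry_injective in Hv; [|assumption].
    assert (Hd : dist P (scale s v) = 0) by (rewrite Hv; apply dist_self).
    rewrite dist_scale_expand, HP, (std_dodeca_norm v Hin) in Hd.
    assert (Hw : dot P v <= rho * phi) by (apply Hprofile, in_map; assumption).
    pose proof (sq_vertex_distance_pos _ Hw) as Hpos. unfold sq_vertex_distance in Hpos.
    apply sqrt_eq_0 in Hd; lra.
Qed.

Lemma profile_sums_agree (P Q : point) (lam : R) :
  const_on_sphere_minus (dodeca_vertices f s) (dodeca_centre f) rho lam ->
  admissible P -> admissible Q ->
  sumR (map (fun w => exp (log_vertex_distance w * lam)) (profile P)) =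
  sumR (map (fun w => exp (log_vertex_distance w * lam)) (profile Q)).
Proof.
  intros [c Hconst] HP HQ.
  destruct (admissible_on_sphere P HP) as [HPs HPv], (admissible_on_sphere Q HQ) as [HQs HQv].
  rewrite <- (power_sum_profile P lam (proj1 HP)), <- (power_sum_profile Q lam (proj1 HQ)).
  rewrite (Hconst _ HPs HPv), (Hconst _ HQs HQv). reflexivity.
Qed.

Lemma dodeca_gap_vanishes (lam : R) :
  const_on_sphere_minus (dodeca_vertices f s) (dodeca_centre f) rho lam ->
  expsum dodeca_gap lam = 0.
Proof.
  intros Hconst. rewrite dodeca_gap_difference.
  rewrite (profile_sums_agree face_point edge_point lam Hconst
             face_point_admissible edge_point_admissible).
  ring.
Qed.

End Sphere.

Theorem mainTheorem8 :
  forall (f : point -> point) (s rho : R),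
    isometry f -> 0 < s -> 0 < rho ->
    forall l : list R, NoDup l ->
      (forall lam, In lam l ->
         const_on_sphere_minus (dodeca_vertices f s) (dodeca_centre f) rho lam) ->
      (length l <= 9)%nat.
Proof.
  intros f s rho Hf Hs Hrho l Hnodup Hconst.
  enough (Hbound : (length l <= 8)%nat) by lia.
  apply (descartes_rule 8 (dodeca_gap s rho) l).
  - exact (dodeca_gap_sign_changes s rho).
  - discriminate.
  - exact (dodeca_gap_sorted s rho Hs Hrho).
  - exact (dodeca_gap_nonzero s rho).
  - exact Hnodup.
  - intros lam Hlam. exact (dodeca_gap_vanishes s rho Hs Hrho f Hf lam (Hconst lam Hlam)).
Qed.
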